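(* Let $f:\mathbb{R}^\ell\times\mathbb{R}^m\to\mathbb{R}^\ell$ be $C^1$, let $\Lambda$ be a parameter shift with limits $\lambda_\pm$, and let $X$ define a stable path with endpoints $X_\pm$. Fix $r>0$ and let $\{x_n^r\}_{n\in\mathbb{Z}}$ be the unique solution of $x_{n+1}=f(x_n,\Lambda(rn))$ with $\lim_{n\to-\infty}x_n^r=X_-$. Then there exists an open set $U\subset\mathbb{R}^\ell$ containing $X_-$ such that for all $y\in U$ and all $n_1\in\mathbb{Z}$, $$\lim_{n_0\to-\infty}\|\phi(n_1,n_0,y)-x_{n_1}^r\|=0.$$
   Context: A parameter shift is a $C^1$ function $\Lambda:\mathbb{R}\to\mathbb{R}^m$ with $\lim_{s\to\pm\infty}\Lambda(s)=\lambda_\pm$ and $\lim_{s\to\pm\infty}\Lambda'(s)=0$. A stable path is given by $X:\mathbb{R}\to\mathbb{R}^\ell$ such that: $X(s)$ is a fixed point of $f(\cdot,\Lambda(s))$ for every $s$; $\{(s,X(s))\}$ is a connected curve; the limits $X_\pm=\lim_{s\to\pm\infty}X(s)$ exist and are fixed points of $f(\cdot,\lambda_\pm)$; and the spectral radius of $D_xf(X(s),\Lambda(s))$ is $<1$ for all $s\in\mathbb{R}\cup\{\pm\infty\}$ (with $X(\pm\infty)=X_\pm$, $\Lambda(\pm\infty)=\lambda_\pm$). (It is known that a unique solution $\{x^r_n\}$ with $x^r_n\to X_-$ as $n\to-\infty$ exists.) For integers $n_0\le n_1$ and $y\in\mathbb{R}^\ell$, $\phi(n_1,n_0,y)$ denotes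 $y_{n_1}$, where $\{y_n\}_{n\ge n_0}$ is the forward orbit of $y_{n+1}=f(y_n,\Lambda(rn))$ with $y_{n_0}=y$. *)

From mathcomp Require Import all_boot all_algebra.
From mathcomp Require Import all_classical all_reals all_analysis.
From mathcomp.real_closed Require Import complex.
Import GRing.Theory Num.Theory numFieldNormedType.Exports.

Set Implicit Arguments.
Unset Strict Implicit.
Unset Printing Implicit Defensive.

Local Open Scope classical_set_scope.
Local Open Scope ring_scope.

Section Defs.
Variable R : realType.

Definition C1_map n k (g : 'rV[R]_n -> 'rV[R]_k) : Prop :=
  (forall p, differentiable g p) /\ continuous (jacobian g).

(* f : R^l x R^m -> R^l, identified with a map on R^(l+m) = R^l x R^m. *)
Definition uncurry_rv l m (f : 'rV[R]_l -> 'rV[R]_m -> 'rV[R]_l) :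
  'rV[R]_(l + m) -> 'rV[R]_l := fun z => f (lsubmx z) (rsubmx z).

Definition C1_curve m (g : R -> 'rV[R]_m) : Prop :=
  (forall s, differentiable g s) /\ continuous (derive1 g).

Definition eigenvalues n (A : 'M[R]_n) : set R[i] :=
  [set z | root (map_poly (fun x : R => real_complex R x) (char_poly A)) z].

Definition spectral_radius n (A : 'M[R]_n) : R :=
  sup [set complex.Re `|z| | z in eigenvalues A].

Definition Dx l m (f : 'rV[R]_l -> 'rV[R]_m -> 'rV[R]_l) x lam : 'M[R]_l :=
  jacobian (fun y => f y lam) x.

Definition parameter_shift m (Lam : R -> 'rV[R]_m) (lm lp : 'rV[R]_m) : Prop :=
  C1_curve Lam /\
  Lam s @[s --> -oo%R] --> lm /\ Lam s @[s --> +oo%R] --> lp /\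
  derive1 Lam s @[s --> -oo%R] --> 0 /\ derive1 Lam s @[s --> +oo%R] --> 0.

Definition stable_path l m (f : 'rV[R]_l -> 'rV[R]_m -> 'rV[R]_l)
  (Lam : R -> 'rV[R]_m) (lm lp : 'rV[R]_m) (X : R -> 'rV[R]_l) (Xm Xp : 'rV[R]_l) : Prop :=
  (forall s, f (X s) (Lam s) = X s) /\
  connected (range (fun s => (s, X s))) /\
  X s @[s --> -oo%R] --> Xm /\ X s @[s --> +oo%R] --> Xp /\
  f Xm lm = Xm /\ f Xp lp = Xp /\
  (forall s, spectral_radius (Dx f (X s) (Lam s)) < 1) /\
  spectral_radius (Dx f Xm lm) < 1 /\ spectral_radius (Dx f Xp lp) < 1.

(* orbit f Lam r n0 y k = y_(n0+k) for y_(n+1) = f(y_n, Lam(r n)), y_(n0) = y *)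
Fixpoint orbit l m (f : 'rV[R]_l -> 'rV[R]_m -> 'rV[R]_l) (Lam : R -> 'rV[R]_m)
  (r : R) (n0 : int) (y : 'rV[R]_l) (k : nat) : 'rV[R]_l :=
  match k with
  | 0%N => y
  | k'.+1 => f (orbit f Lam r n0 y k') (Lam (r * (n0 + k'%:Z)%:~R))
  end.

(* phi(n1, n0, y) = y_(n1), meaningful for n0 <= n1 *)
Definition phi l m (f : 'rV[R]_l -> 'rV[R]_m -> 'rV[R]_l) (Lam : R -> 'rV[R]_m)
  (r : R) (n1 n0 : int) (y : 'rV[R]_l) : 'rV[R]_l :=
  orbit f Lam r n0 y `|n1 - n0|%N.

End Defs.

From Pilot Require Import Defs.
From mathcomp Require Import all_boot all_order all_algebra.
From mathcomp Require Import all_classical all_reals all_analysis.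
From mathcomp.real_closed Require Import complex.
From mathcomp Require Import ring lra zify.
From HB Require Import structures.
Import Order.TTheory GRing.Theory Num.Theory numFieldNormedType.Exports.

Set Implicit Arguments.
Unset Strict Implicit.
Unset Printing Implicit Defensive.

Local Open Scope classical_set_scope.
Local Open Scope ring_scope.

(* Write J = D_x f(X_-, lambda_-).  Since its spectral radius is below 1,
   some power J^K halves every vector, and in the adapted norm
   N v = sum_(j < K) |v J^j| the matrix J itself is a strict contraction.
   As f is C^1, f(., lambda) is then, for every lambda close to lambda_-, a
   uniform N-contraction of a small N-ball around X_- into itself.  Since
   Lambda(r n) -> lambda_- and x_n -> X_- as n -> -oo, this holds at every
   step n <= n_S, and the ball contains every x_n with n <= n_S.  An orbit
   started in the ball at time n_2 - j is therefore within rho^j diam of x_(n_2)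
   at time n_2 <= n_S, and the fixed continuous map from time n_2 to time n_1
   carries this convergence over to time n_1. *)

Section MatrixNorm.
Variable R : realType.

Lemma normr_mx_entry_le p q (M : 'M[R]_(p, q)) i j : `|M i j| <= `|M|.
Proof.
rewrite [leRHS]/Num.Def.normr /= mx_normrE.
exact: (le_bigmax _ (fun ij : 'I_p * 'I_q => `|M ij.1 ij.2|) (i, j)).
Qed.

Lemma mx_normr_le p q (M : 'M[R]_(p, q)) c : 0 <= c ->
  (forall i j, `|M i j| <= c) -> `|M| <= c.
Proof.
move=> c0 Mc; rewrite [leLHS]/Num.Def.normr /= mx_normrE.
by apply: bigmax_le => // -[i j] _; apply: Mc.
Qed.

Lemma normr_mulmx_le p q (v : 'rV[R]_p) (M : 'M[R]_(p, q)) :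
  `|v *m M| <= p%:R * `|M| * `|v|.
Proof.
apply: mx_normr_le => [|i j]; first by rewrite !mulr_ge0.
rewrite mxE (le_trans (ler_norm_sum _ _ _)) //.
apply: (@le_trans _ _ (\sum_(k < p) `|M| * `|v|)).
  apply: ler_sum => k _; rewrite normrM mulrC (ord1 i).
  by apply: ler_pM => //; apply: normr_mx_entry_le.
by rewrite sumr_const card_ord -[leLHS]mulr_natl mulrA.
Qed.

Lemma normr_row_mx_le a b (u : 'rV[R]_a) (v : 'rV[R]_b) :
  `|row_mx u v| <= Num.max `|u| `|v|.
Proof.
apply: mx_normr_le => [|i j]; first by rewrite le_max normr_ge0.
rewrite (ord1 i) le_max; case: (split_ordP j) => k ->.
  by rewrite row_mxEl normr_mx_entry_le.
by rewrite row_mxEr normr_mx_entry_le orbT.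
Qed.

Lemma normr_usubmx_le a b n (M : 'M[R]_(a + b, n)) : `|usubmx M| <= `|M|.
Proof.
apply: mx_normr_le => // i j.
by rewrite mxE normr_mx_entry_le.
Qed.

Lemma continuous_row_mxl a b (c : 'rV[R]_b) :
  continuous (fun y : 'rV[R]_a => row_mx y c).
Proof.
move=> u A /nbhs_ballP[e /= e0 eA].
apply/nbhs_ballP; exists e => //= v [_ uv]; apply: eA; split => // i j.
by case: (split_ordP j) => k ->; rewrite ?row_mxEl ?row_mxEr //; apply: ballxx.
Qed.

Lemma continuous_row_mxr a b (c : 'rV[R]_a) :
  continuous (fun y : 'rV[R]_b => row_mx c y).
Proof.
move=> u A /nbhs_ballP[e /= e0 eA].
apply/nbhs_ballP; exists e => //= v [_ uv]; apply: eA; split => // i j.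
by case: (split_ordP j) => k ->; rewrite ?row_mxEl ?row_mxEr //; apply: ballxx.
Qed.

End MatrixNorm.

Section StableMatrixPowers.
Variable R : realType.

Lemma cvg_geometric_mulr0 (a c : R) : 0 <= a -> a < 1 ->
  (fun k => a ^+ k * c) @ \oo --> 0.
Proof.
move=> a0 a1; rewrite -(mul0r c); apply: cvgMr_tmp.
by apply: cvg_expr; rewrite ger0_norm.
Qed.

Lemma cvg0_contractive_recursion (a : R) (u b : nat -> R) : 0 <= a -> a < 1 ->
  (forall n, 0 <= u n) -> (forall n, u n.+1 <= a * u n + b n) ->
  b @ \oo --> 0 -> u @ \oo --> 0.
Proof.
move=> a0 a1 u0 ub /cvgrPdist_lt b0; apply/cvgrPdist_lt => e e0.
have e1 : 0 < e * (1 - a) / 2 by rewrite divr_gt0 // mulr_gt0 // subr_gt0.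
have [N _ bN] := b0 _ e1.
have uN k : u (N + k)%N <= a ^+ k * u N + e / 2.
  elim: k => [|k IH]; first by rewrite addn0 expr0 mul1r lerDl divr_ge0 // ltW.
  rewrite addnS (le_trans (ub _)) //.
  have := bN (N + k)%N (leq_addr _ _); rewrite sub0r normrN => /ltW/ler_normlW bk.
  apply: le_trans (lerD (ler_wpM2l a0 IH) bk) _.
  by rewrite exprS -mulrA; lra.
have e2 : 0 < e / 2 by rewrite divr_gt0.
have [M _ geoM] := cvgr_lt _ (cvg_geometric_mulr0 (u N) a0 a1) _ e2.
exists (N + M)%N => // n /= nNM; rewrite sub0r normrN ger0_norm //.
rewrite -(subnKC (leq_trans (leq_addr M N) nNM)).
apply: le_lt_trans (uN _) _; rewrite [ltRHS](splitr e) ltrD2r.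
by apply: geoM => /=; lia.
Qed.

Local Open Scope complex_scope.
Local Notation normc := (@Normc.normc R).

Lemma normc_ge0 (z : R[i]) : 0 <= normc z.
Proof. by case: z => a b; apply: sqrtr_ge0. Qed.

Lemma normc_real (x : R) : normc x%:C = `|x|.
Proof. by rewrite /Normc.normc /= expr0n addr0 sqrtr_sqr. Qed.

(* [B ^+ k.+1 *m M = z *: (B ^+ k *m M) + B ^+ k *m M'], where
   [M' = (B - z) *m M] is annihilated by the remaining factors. *)
Lemma annihilated_powers_cvg0 n (B : 'M[R[i]]_n.+1) (s : seq R[i]) :
  (forall z, z \in s -> normc z < 1) ->
  forall M : 'M[R[i]]_n.+1, horner_mx B (\prod_(z <- s) ('X - z%:P)) *m M = 0 ->
  forall i j, (fun k => normc ((B ^+ k *m M) i j)) @ \oo --> 0.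
Proof.
elim: s => [|z s IH] s_lt1 M.
  rewrite big_nil rmorph1 mul1mx => -> i j.
  under eq_fun do rewrite mulmx0 mxE Normc.normc0.
  exact: cvg_cst.
rewrite big_cons mulrC rmorphM /= -mulmxA => sM i j.
have Bz : horner_mx B ('X - z%:P) = B - z%:M.
  by rewrite rmorphB /= horner_mx_X horner_mx_C.
rewrite Bz in sM.
have IHz := IH (fun w ws => s_lt1 w (mem_behead (s := z :: s) ws)) _ sM i j.
apply: (@cvg0_contractive_recursion (normc z) _ _ _ _ _ _ IHz).
- exact: normc_ge0.
- by apply: s_lt1; rewrite inE eqxx.
- by move=> k; apply: normc_ge0.
move=> k.
have -> : (B ^+ k.+1 *m M) i j =
    z * (B ^+ k *m M) i j + (B ^+ k *m ((B - z%:M) *m M)) i j.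
  rewrite mulmxBl mul_scalar_mx mulmxBr -scalemxAr mulmxA mulmxE -exprSr -mulmxE.
  by rewrite !mxE addrCA subrr addr0.
by rewrite -Normc.normcM; apply: le_normcD.
Qed.

Lemma spectral_radius_lt1_cvg0 n (J : 'M[R]_n) : spectral_radius J < 1 ->
  forall i j, (fun k => (J ^+ k) i j) @ \oo --> 0.
Proof.
case: n J => [J _ [] //|n J sJ i j].
pose B := map_mx (real_complex R) J.
have [rs charB] := closed_field_poly_normal (char_poly B).
rewrite (monicP (char_poly_monic B)) scale1r in charB.
have rs_lt1 z : z \in rs -> normc z < 1.
  move=> zrs; have Jz : eigenvalues J z.
    by rewrite /eigenvalues /= map_char_poly -/B charB root_prod_XsubC.
  apply: le_lt_trans sJ; apply: sup_upper_bound; last by exists z.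
  split; first by exists (normc z), z.
  exists (\big[Num.max/0]_(w <- rs) normc w) => _ [w ew <-].
  have wrs : w \in rs by rewrite -root_prod_XsubC -charB /B -map_char_poly.
  by change (normc w <= \big[Num.max/0]_(w0 <- rs) normc w0); apply: le_bigmax_seq.
have := @annihilated_powers_cvg0 _ B _ rs_lt1 1.
rewrite mulmx1 -charB Cayley_Hamilton => /(_ erefl i j).
have BkE k : B ^+ k = map_mx (real_complex R) (J ^+ k).
  by elim: k => [|k IH]; rewrite ?map_mx1 // !exprS IH map_mxM.
under eq_fun do rewrite mulmx1 BkE mxE normc_real.
by move/norm_cvg0P.
Qed.

Lemma spectral_radius_lt1_halving_power n (J : 'M[R]_n) :
  spectral_radius J < 1 ->
  exists2 K, (0 < K)%N & forall v : 'rV[R]_n, `|v *m J ^+ K| <= `|v| / 2.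
Proof.
move=> sJ; set e := (2 * n.+1%:R)^-1 : R.
have e0 : 0 < e by rewrite invr_gt0 mulr_gt0 // ltr0n.
have : \forall k \near \oo, forall ij : 'I_n * 'I_n, `|(J ^+ k) ij.1 ij.2| < e.
  apply: (@filter_forall _ _ (fun ij k => `|(J ^+ k) ij.1 ij.2| < e)) => -[i j].
  by move: (spectral_radius_lt1_cvg0 sJ i j) => /cvgr0_norm_lt; apply.
case=> K _ JK; exists K.+1 => // v.
apply: le_trans (normr_mulmx_le _ _) _.
have JKe : `|J ^+ K.+1| <= e.
  by apply: mx_normr_le => [|i j]; [exact: ltW | exact: ltW (JK _ (leqnSn K) (i, j))].
apply: (@le_trans _ _ (n%:R * e * `|v|)).
  by apply: ler_wpM2r => //; apply: ler_wpM2l.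
rewrite mulrC ler_wpM2l // /e invfM mulrCA -[leRHS]mulr1 ler_wpM2l ?invr_ge0 //.
by rewrite ler_pdivrMr ?ltr0n // mul1r ler_nat.
Qed.

End StableMatrixPowers.

Section AdaptedNorm.
Variables (R : realType) (p : nat) (J : 'M[R]_p) (K : nat).
Hypothesis K_gt0 : (0 < K)%N.
Hypothesis JK_half : forall v : 'rV[R]_p, `|v *m J ^+ K| <= `|v| / 2.

Definition adapted_norm (v : 'rV[R]_p) := \sum_(j < K) `|v *m J ^+ j|.

Definition adapted_const := 1 + \sum_(j < K) p%:R * `|J ^+ j|.

Local Notation N := adapted_norm.
Local Notation C := adapted_const.

Lemma adapted_const_ge1 : 1 <= C.
Proof. by rewrite lerDl; apply: sumr_ge0 => j _; rewrite mulr_ge0. Qed.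

Lemma adapted_const_gt0 : 0 < C.
Proof. exact: lt_le_trans ltr01 adapted_const_ge1. Qed.

Lemma normr_le_adapted v : `|v| <= N v.
Proof.
rewrite /N; case: K K_gt0 => // K' _.
by rewrite big_ord_recl /= expr0 mulmx1 lerDl; apply: sumr_ge0.
Qed.

Lemma adapted_le_normr v : N v <= C * `|v|.
Proof.
rewrite /C mulrDl mul1r mulr_suml -[leLHS]add0r; apply: lerD => //.
by apply: ler_sum => j _; apply: normr_mulmx_le.
Qed.

Lemma adapted_normD u v : N (u + v) <= N u + N v.
Proof.
by rewrite /N -big_split /=; apply: ler_sum => j _; rewrite mulmxDl ler_normD.
Qed.

Lemma adapted_normN v : N (- v) = N v.
Proof. by apply: eq_bigr => j _; rewrite mulNmx normrN. Qed.

Lemma adapted_norm_subr_le u v w : N (u - v) <= N (u - w) + N (v - w).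
Proof.
have -> : u - v = (u - w) + - (v - w) by rewrite opprB addrA subrK.
by rewrite -(adapted_normN (v - w)) adapted_normD.
Qed.

(* Shifting the window of the sum by one trades [|v|] for [|v J^K| <= |v|/2]. *)
Lemma adapted_norm_mulmx v : N (v *m J) <= (1 - (2 * C)^-1) * N v.
Proof.
have NvJ : N (v *m J) = N v + `|v *m J ^+ K| - `|v|.
  rewrite /N; case: K K_gt0 => // K' _.
  pose a j := `|v *m J ^+ j|.
  have shift : \sum_(j < K'.+1) `|v *m J *m J ^+ j| = \sum_(j < K'.+1) a j.+1.
    by apply: eq_bigr => j _; rewrite -mulmxA mulmxE -exprS.
  have peel_first : \sum_(j < K'.+2) a j = a 0%N + \sum_(j < K'.+1) a j.+1.
    by rewrite big_ord_recl.
  have peel_last : \sum_(j < K'.+2) a j = \sum_(j < K'.+1) a j + a K'.+1.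
    by rewrite big_ord_recr.
  have a0 : a 0%N = `|v| by rewrite /a expr0 mulmx1.
  by rewrite shift -/(a K'.+1) -a0 -peel_last peel_first; ring.
have vN : N v / C <= `|v|.
  by rewrite ler_pdivrMr ?adapted_const_gt0 // mulrC adapted_le_normr.
have -> : (1 - (2 * C)^-1) * N v = N v - N v / C / 2.
  by have := adapted_const_gt0; rewrite invfM => C0; field; rewrite gt_eqF.
by rewrite NvJ; have := JK_half v; lra.
Qed.

End AdaptedNorm.

Section MeanValue.
Variable R : realType.

Lemma derive_line_eq (U V W : normedModType R) (G : U -> W) (H : V -> W) a v a' v' :
  (forall t : R, G (t *: v + a) = H (t *: v' + a')) ->
  'D_v G a = 'D_v' H a' /\ (derivable G a v <-> derivable H a' v').
Proof.
move=> GH; have Ga : G a = H a' by have := GH 0; rewrite !scale0r !add0r.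
rewrite /derive /derivable.
have -> : (fun h : R => h^-1 *: ((G \o shift a) (h *: v) - G a)) =
          (fun h : R => h^-1 *: ((H \o shift a') (h *: v') - H a')).
  by apply/funext => h /=; rewrite GH Ga.
by [].
Qed.

Lemma derive_along_line n q (F : 'rV[R]_n -> 'rV[R]_q) (w h : 'rV[R]_n) (t : R) :
  differentiable F (w + t *: h) ->
  derivable (fun s : R => F (w + s *: h)) t 1 /\
  'D_1 (fun s : R => F (w + s *: h)) t = h *m jacobian F (w + t *: h).
Proof.
move=> dF.
have line s : F (w + (s *: (1 : R) + t) *: h) = F (s *: h + (w + t *: h)).
  by rewrite -[s *: (1 : R)]/(s * 1) mulr1 scalerDl addrCA.
have [-> ->] := @derive_line_eq _ _ _ (fun s : R => F (w + s *: h)) F t 1 _ h line.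
by split; [exact: diff_derivable | rewrite deriveEjacobian].
Qed.

Lemma mean_value_entry n q (F : 'rV[R]_n -> 'rV[R]_q) (w h : 'rV[R]_n) i :
  (forall p, differentiable F p) ->
  exists2 c, 0 <= c <= 1 &
    (F (w + h) - F w) 0 i = (h *m jacobian F (w + c *: h)) 0 i.
Proof.
move=> dF; pose g t := F (w + t *: h) 0 i.
have dg t : derivable g t 1 /\ 'D_1 g t = (h *m jacobian F (w + t *: h)) 0 i.
  have [dFt DFt] := derive_along_line (dF (w + t *: h)).
  split; first by move/derivable_mxP : dFt; apply.
  by rewrite -DFt derive_mx // mxE.
have g' (t : R) : t \in `]0, 1[%R -> is_derive t 1 g ((h *m jacobian F (w + t *: h)) 0 i).
  by move=> _; have [dgt <-] := dg t; apply: derivableP.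
have gc : {within `[0, 1], continuous g}.
  by apply: derivable_within_continuous => t _; have [] := dg t.
have [c] := MVT_segment ler01 g' gc.
rewrite in_itv /= /g subr0 mulr1 scale1r scale0r addr0 => c01 E.
by exists c => //; rewrite -E [in LHS]mxE [in X in _ + X]mxE.
Qed.

Lemma differentiable_row_mxl a b (c : 'rV[R]_b) (y : 'rV[R]_a) :
  differentiable (fun z : 'rV[R]_a => row_mx z c) y.
Proof.
have row_mx0_linear : linear (fun z : 'rV[R]_a => row_mx z (0 : 'rV[R]_b)).
  by move=> k u v; rewrite scale_row_mx add_row_mx scaler0 addr0.
pose L : {linear 'rV[R]_a -> 'rV[R]_(a + b)} :=
  HB.pack (fun z : 'rV[R]_a => row_mx z 0)
    (GRing.isLinear.Build _ _ _ _ _ row_mx0_linear).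
have -> : (fun z => row_mx z c) = (fun z => L z + row_mx 0 c).
  by apply/funext => z /=; rewrite add_row_mx addr0 add0r.
apply: differentiableD => //.
exact/linear_differentiable/continuous_row_mxl.
Qed.

Lemma normr_segment_lt (V : normedModType R) (x y z : V) (c d : R) :
  0 <= c <= 1 -> `|y - x| < d -> `|z - x| < d -> `|z + c *: (y - z) - x| < d.
Proof.
move=> /andP[c0 c1] yx zx.
have -> : z + c *: (y - z) - x = (1 - c) *: (z - x) + c *: (y - x).
  have -> : z + c *: (y - z) - x = (z - x) + c *: ((y - x) - (z - x)).
    by rewrite opprB addrA subrK addrAC.
  by rewrite scalerBr scalerBl scale1r addrA addrAC.
have c'0 : 0 <= 1 - c by rewrite subr_ge0.
apply: le_lt_trans (ler_normD _ _) _; rewrite !normrZ !ger0_norm //.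
set M := Num.max `|z - x| `|y - x|.
have Md : M < d by rewrite gt_max zx yx.
have zM : `|z - x| <= M by rewrite le_max lexx.
have yM : `|y - x| <= M by rewrite le_max lexx orbT.
have := ler_wpM2l c'0 zM; have := ler_wpM2l c0 yM; lra.
Qed.

End MeanValue.

Section PartialDerivatives.
Variables (R : realType) (l m : nat) (f : 'rV[R]_l -> 'rV[R]_m -> 'rV[R]_l).
Local Notation F := (uncurry_rv f).
Hypothesis F_diff : forall p, differentiable F p.
Hypothesis F_jacobian_cont : continuous (jacobian F).

Lemma uncurry_row_mx y lam : F (row_mx y lam) = f y lam.
Proof. by rewrite /uncurry_rv row_mxKl row_mxKr. Qed.

Lemma differentiable_partial_l lam y : differentiable (f ^~ lam) y.
Proof.
have -> : f ^~ lam = F \o (row_mx ^~ lam).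
  by apply/funext => z /=; rewrite uncurry_row_mx.
by apply: differentiable_comp; [exact: differentiable_row_mxl | exact: F_diff].
Qed.

Lemma continuous_partial_r y : continuous (f y).
Proof.
have -> : f y = F \o row_mx y by apply/funext => lam /=; rewrite uncurry_row_mx.
move=> lam; apply: continuous_comp; first exact: continuous_row_mxr.
exact: differentiable_continuous.
Qed.

Lemma Dx_usubmx y lam : Dx f y lam = usubmx (jacobian F (row_mx y lam)).
Proof.
apply/row_matrixP => i; rewrite !rowE /Dx.
rewrite -deriveEjacobian; last exact: differentiable_partial_l.
have line t : f (t *: delta_mx 0 i + y) lam =
    F (t *: row_mx (delta_mx 0 i) 0 + row_mx y lam).
  by rewrite scale_row_mx scaler0 add_row_mx add0r uncurry_row_mx.
have [-> _] := @derive_line_eq _ _ _ _ (f ^~ lam) F _ _ _ _ line.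
rewrite deriveEjacobian // -[in LHS](vsubmxK (jacobian F _)).
by rewrite mul_row_col mul0mx addr0.
Qed.

Lemma Dx_continuous_at y0 lam0 e : 0 < e ->
  exists2 d, 0 < d & forall y lam, `|y - y0| < d -> `|lam - lam0| < d ->
    `|Dx f y lam - Dx f y0 lam0| < e.
Proof.
move=> e0; have /cvgrPdist_lt/(_ e e0)/nbhs_ballP[d d0 Jd] :=
  @F_jacobian_cont (row_mx y0 lam0).
exists d => // y lam yd lamd.
rewrite !Dx_usubmx -linearB (le_lt_trans (normr_usubmx_le _)) // distrC.
apply: Jd; rewrite -ball_normE /= opp_row_mx add_row_mx.
apply: le_lt_trans (normr_row_mx_le _ _) _.
by rewrite gt_max (distrC y0) yd (distrC lam0) lamd.
Qed.

Lemma Dx_linearization y0 lam0 eps : 0 < eps ->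
  exists2 d, 0 < d & forall y z lam,
    `|y - y0| < d -> `|z - y0| < d -> `|lam - lam0| < d ->
    `|f y lam - f z lam - (y - z) *m Dx f y0 lam0| <= eps * `|y - z|.
Proof.
move=> eps0; have l1 : 0 < l%:R + 1 :> R by rewrite ltr_pwDr.
have [d d0 Dxd] := Dx_continuous_at y0 lam0 (divr_gt0 eps0 l1).
exists d => // y z lam yd zd lamd.
apply: mx_normr_le => [|i j]; first by rewrite mulr_ge0 // ltW.
have [c c01 mvt] := mean_value_entry z (y - z) j (@differentiable_partial_l lam).
set p := z + c *: (y - z) in mvt.
rewrite [z + _]addrC subrK in mvt.
have -> : (f y lam - f z lam - (y - z) *m Dx f y0 lam0) i j =
    ((y - z) *m (Dx f p lam - Dx f y0 lam0)) 0 j.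
  by rewrite (ord1 i) mulmxBr [LHS]mxE [RHS]mxE -mvt.
apply: le_trans (normr_mx_entry_le _ _ _) _.
apply: le_trans (normr_mulmx_le _ _) _; apply: ler_wpM2r => //.
have := Dxd p lam (normr_segment_lt c01 yd zd) lamd.
move/ltW/(ler_wpM2l (ler0n _ l)) => /le_trans; apply.
rewrite mulrCA -[leRHS]mulr1 ler_wpM2l ?(ltW eps0) //.
by rewrite ler_pdivrMr // mul1r lerDl.
Qed.

End PartialDerivatives.

Definition contraction_on (R : realType) n (N : 'rV[R]_n -> R) (B : set 'rV[R]_n)
    (rho : R) (g : 'rV[R]_n -> 'rV[R]_n) :=
  (forall w, B w -> B (g w)) /\
  (forall w z, B w -> B z -> N (g w - g z) <= rho * N (w - z)).

Section LocalContraction.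
Variables (R : realType) (l m : nat) (f : 'rV[R]_l -> 'rV[R]_m -> 'rV[R]_l).
Hypothesis F_diff : forall p, differentiable (uncurry_rv f) p.
Hypothesis F_jacobian_cont : continuous (jacobian (uncurry_rv f)).
Variables (Xm : 'rV[R]_l) (lm : 'rV[R]_m) (K : nat).
Hypothesis fXm : f Xm lm = Xm.
Hypothesis K_gt0 : (0 < K)%N.
Hypothesis JK_half : forall v : 'rV[R]_l, `|v *m Dx f Xm lm ^+ K| <= `|v| / 2.

Local Notation N := (adapted_norm (Dx f Xm lm) K).
Local Notation C := (adapted_const (Dx f Xm lm) K).
Let rho := 1 - (4 * C)^-1.

Let C_ge1 : 1 <= C := adapted_const_ge1 _ _.
Let C_gt0 : 0 < C := adapted_const_gt0 _ _.

Let rho_ge0 : 0 <= rho.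
Proof.
rewrite subr_ge0 invf_le1 ?mulr_gt0 //.
by apply: le_trans C_ge1 _; rewrite ler_peMl // ?ler1n // ltW.
Qed.

Let rho_lt1 : rho < 1.
Proof. by rewrite gtrBl invr_gt0 mulr_gt0. Qed.

(* The linearization error [eps * |w - z|] with [eps = 1/(4 C^2)] costs at most
   [N (w - z) / (4 C)], half of the gain of [J] in the adapted norm. *)
Lemma adapted_contraction_near : exists2 d, 0 < d & forall w z lam,
  `|w - Xm| < d -> `|z - Xm| < d -> `|lam - lm| < d ->
  N (f w lam - f z lam) <= rho * N (w - z).
Proof.
have eps0 : 0 < (4 * C * C)^-1 by rewrite invr_gt0 !mulr_gt0.
have [d d0 lin] := Dx_linearization F_diff F_jacobian_cont Xm lm eps0.
exists d => // w z lam wd zd lamd.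
rewrite -[f w lam - f z lam](subrK ((w - z) *m Dx f Xm lm)).
apply: le_trans (adapted_normD _ _ _ _) _.
have NJ := adapted_norm_mulmx K_gt0 JK_half (w - z).
have NE : N (f w lam - f z lam - (w - z) *m Dx f Xm lm) <=
    C * ((4 * C * C)^-1 * N (w - z)).
  apply: le_trans (adapted_le_normr _ _ _) _; rewrite ler_wpM2l ?(ltW C_gt0) //.
  apply: le_trans (lin _ _ _ wd zd lamd) _.
  by rewrite ler_wpM2l ?(ltW eps0) // normr_le_adapted.
have -> : rho * N (w - z) =
    (1 - (2 * C)^-1) * N (w - z) + C * ((4 * C * C)^-1 * N (w - z)).
  by rewrite /rho; field; rewrite gt_eqF.
by rewrite addrC; apply: lerD.
Qed.

Lemma local_contraction : exists rho, [/\ 0 <= rho, rho < 1 &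
  exists2 del, 0 < del & exists2 dl, 0 < dl & forall lam, `|lam - lm| < dl ->
    contraction_on N [set w | N (w - Xm) < del] rho (f ^~ lam)].
Proof.
exists rho; split => //.
have [del del0 contr] := adapted_contraction_near.
exists del => //.
have e0 : 0 < (1 - rho) * del / C by rewrite divr_gt0 // mulr_gt0 // subr_gt0.
have /cvgrPdist_lt/(_ _ e0)/nbhs_ballP[d d0 fXmd] :=
  @continuous_partial_r _ _ _ _ F_diff Xm lm.
have in_ball w : N (w - Xm) < del -> `|w - Xm| < del.
  exact: le_lt_trans (normr_le_adapted _ K_gt0 _).
exists (Num.min del d) => [|lam]; first by rewrite lt_min del0 d0.
rewrite lt_min => /andP[lam_del lam_d]; split => [w /= wB | w z /= wB zB].
- have fXm_lam : N (f Xm lam - Xm) < (1 - rho) * del.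
    have : ball lm d lam by rewrite -ball_normE /= distrC.
    move/fXmd; rewrite /= fXm distrC => fXm_near.
    apply: le_lt_trans (adapted_le_normr _ _ _) _.
    by rewrite -ltr_pdivlMl // mulrC.
  have XmB : `|Xm - Xm| < del by rewrite subrr normr0.
  rewrite -(subrK (f Xm lam) (f w lam)) -addrA.
  have := contr _ _ _ (in_ball _ wB) XmB lam_del.
  have := adapted_normD (Dx f Xm lm) K (f w lam - f Xm lam) (f Xm lam - Xm).
  have := ler_wpM2l rho_ge0 (ltW wB).
  lra.
- exact: contr (in_ball _ wB) (in_ball _ zB) lam_del.
Qed.

End LocalContraction.

Section Orbits.
Variables (R : realType) (l m : nat) (f : 'rV[R]_l -> 'rV[R]_m -> 'rV[R]_l)
  (Lam : R -> 'rV[R]_m) (r : R).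

Lemma orbitS n0 w k : Defs.orbit f Lam r n0 w k.+1 =
  Defs.orbit f Lam r (n0 + 1) (f w (Lam (r * n0%:~R))) k.
Proof.
elim: k => [|k IH] /=; first by rewrite addr0.
by rewrite -IH /=; congr (f _ (Lam (r * _%:~R))); lia.
Qed.

Lemma orbitD n0 w a b : Defs.orbit f Lam r n0 w (a + b) =
  Defs.orbit f Lam r (n0 + a%:Z) (Defs.orbit f Lam r n0 w a) b.
Proof.
elim: b => [|b IH]; first by rewrite addn0.
by rewrite addnS /= IH; congr (f _ (Lam (r * _%:~R))); lia.
Qed.

Lemma orbit_solution (x : int -> 'rV[R]_l) :
  (forall n : int, x (n + 1) = f (x n) (Lam (r * n%:~R))) ->
  forall n0 k, Defs.orbit f Lam r n0 (x n0) k = x (n0 + k%:Z).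
Proof.
move=> x_sol n0; elim=> [|k IH] /=; first by rewrite addr0.
by rewrite IH -x_sol; congr x; lia.
Qed.

Lemma continuous_orbit n0 k : (forall lam, continuous (f ^~ lam)) ->
  continuous (fun w => Defs.orbit f Lam r n0 w k).
Proof.
move=> f_cont; elim: k => [|k IH] w /=; first exact: cvg_id.
exact: continuous_comp (IH w) (f_cont _ _).
Qed.

End Orbits.

Section Pullback.
Variables (R : realType) (l m : nat) (f : 'rV[R]_l -> 'rV[R]_m -> 'rV[R]_l)
  (Lam : R -> 'rV[R]_m) (r : R) (x : int -> 'rV[R]_l).
Hypothesis x_sol : forall n : int, x (n + 1) = f (x n) (Lam (r * n%:~R)).
Hypothesis f_cont : forall lam, continuous (f ^~ lam).
Variables (N : 'rV[R]_l -> R) (B : set 'rV[R]_l) (rho D : R) (nS : int).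
Hypothesis normr_le_N : forall v, `|v| <= N v.
Hypotheses (rho_ge0 : 0 <= rho) (rho_lt1 : rho < 1).
Hypothesis B_diam : forall u v, B u -> B v -> N (u - v) <= D.
Hypothesis x_in_B : forall n, n <= nS -> B (x n).
Hypothesis contr : forall n, n <= nS -> contraction_on N B rho (f ^~ (Lam (r * n%:~R))).

Lemma orbit_contraction n2 j w : n2 <= nS -> B w ->
  N (Defs.orbit f Lam r (n2 - j%:Z) w j - x n2) <= rho ^+ j * N (w - x (n2 - j%:Z)).
Proof.
move=> n2nS; elim: j w => [|j IH] w Bw; first by rewrite /= subr0 expr0 mul1r.
have nj : n2 - j.+1%:Z <= nS by lia.
have [Bstep Nstep] := contr nj.
have nE : n2 - j.+1%:Z + 1 = n2 - j%:Z by lia.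
rewrite orbitS nE; apply: le_trans (IH _ (Bstep _ Bw)) _.
rewrite -nE x_sol exprSr -mulrA ler_wpM2l ?exprn_ge0 //.
exact: Nstep Bw (x_in_B nj).
Qed.

Lemma orbit_cvg_solution n2 y : n2 <= nS -> B y ->
  (fun j => Defs.orbit f Lam r (n2 - j%:Z) y j) @ \oo --> x n2.
Proof.
move=> n2nS By; apply/cvgrPdist_le => e e0.
apply: filterS (cvgr_le _ (cvg_geometric_mulr0 D rho_ge0 rho_lt1) _ e0) => j geo_j.
rewrite distrC (le_trans (normr_le_N _)) // (le_trans (orbit_contraction _ _ _)) //.
apply: le_trans geo_j; rewrite ler_wpM2l ?exprn_ge0 //.
by apply: B_diam By (x_in_B _); lia.
Qed.

Lemma pullback_cvg y : B y -> forall n1 : int,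
  (fun k : nat => `|phi f Lam r n1 (n1 - k%:Z) y - x n1|) @ \oo --> 0.
Proof.
move=> By n1; pose n2 := Num.min n1 nS; pose d := `|n1 - n2|%N.
have n2nS : n2 <= nS by rewrite ge_min lexx orbT.
have n2n1 : n2 <= n1 by rewrite ge_min lexx.
have n1E : n1 = n2 + d%:Z by rewrite /d; lia.
pose Phi w := Defs.orbit f Lam r n2 w d.
have phiE j : phi f Lam r n1 (n1 - (j + d)%N%:Z) y =
    Phi (Defs.orbit f Lam r (n2 - j%:Z) y j).
  rewrite /phi /Phi (_ : `|_|%N = (j + d)%N); last by lia.
  rewrite (_ : n1 - _ = n2 - j%:Z); last by lia.
  by rewrite orbitD; congr Defs.orbit; lia.
have xE : x n1 = Phi (x n2) by rewrite /Phi orbit_solution // -n1E.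
rewrite -(cvg_shiftn d) /=; under eq_fun do rewrite phiE xE.
apply/norm_cvg0P/subr_cvg0; apply: continuous_cvg.
  exact: continuous_orbit.
exact: orbit_cvg_solution.
Qed.

End Pullback.

Lemma near_oo_nonpos_int (P : int -> Prop) :
  (\forall k \near \oo, P (- k%:Z)) -> exists nS : int, forall n, n <= nS -> P n.
Proof.
case=> M _ PM; exists (- M%:Z) => n nM.
have -> : n = - `|n|%N%:Z by lia.
by apply: PM => /=; lia.
Qed.

Lemma cvg_mulr_Nnat_ninfty (R : realType) (r : R) : 0 < r ->
  (fun k : nat => r * (- k%:Z)%:~R) @ \oo --> -oo.
Proof.
move=> r0; apply/cvgrNyPlt => A.
apply: filterS (cvgry_gt cvgr_idn (- A / r)) => k.
by rewrite mulrNz -pmulrn mulrN ltrNl [r * _]mulrC -ltr_pdivrMr.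
Qed.

Theorem mainTheorem2 (R : realType) (l m : nat)
  (f : 'rV[R]_l -> 'rV[R]_m -> 'rV[R]_l)
  (Lam : R -> 'rV[R]_m) (lm lp : 'rV[R]_m)
  (X : R -> 'rV[R]_l) (Xm Xp : 'rV[R]_l) (r : R)
  (x : int -> 'rV[R]_l) :
  C1_map (uncurry_rv f) ->
  parameter_shift Lam lm lp ->
  stable_path f Lam lm lp X Xm Xp ->
  0 < r ->
  (forall n : int, x (n + 1) = f (x n) (Lam (r * n%:~R))) ->
  (fun k : nat => x (- k%:Z)) @ \oo --> Xm ->
  exists U : set 'rV[R]_l, open U /\ U Xm /\
    forall y, U y -> forall n1 : int,
      (fun k : nat => `|phi f Lam r n1 (n1 - k%:Z) y - x n1|) @ \oo --> 0.
Proof.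
move=> [F_diff F_jac] [_ [Lam_lm _]] [_ [_ [_ [_ [fXm [_ [_ [stable_Xm _]]]]]]]].
move=> r0 x_sol x_Xm.
have [K K0 JK] := spectral_radius_lt1_halving_power stable_Xm.
pose N := adapted_norm (Dx f Xm lm) K; pose C := adapted_const (Dx f Xm lm) K.
have C0 : 0 < C := adapted_const_gt0 _ _.
have [rho [rho0 rho1 [del del0 [dl dl0 contr]]]] :=
  local_contraction F_diff F_jac fXm K0 JK.
have delC : 0 < del / C by rewrite divr_gt0.
have [nS tail] : exists nS : int, forall n, n <= nS ->
    `|Lam (r * n%:~R) - lm| < dl /\ `|x n - Xm| < del / C.
  apply: near_oo_nonpos_int.
  have /cvgrPdist_lt/(_ _ dl0) Lam_near :=
    cvg_comp _ _ (cvg_mulr_Nnat_ninfty r0) Lam_lm.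
  have /cvgrPdist_lt/(_ _ delC) x_near := x_Xm.
  by apply: filterS2 Lam_near x_near => k /=; rewrite !(distrC lm) !(distrC Xm).
have ball_N w : `|w - Xm| < del / C -> N (w - Xm) < del.
  move=> wXm; apply: le_lt_trans (adapted_le_normr _ _ _) _.
  by rewrite -ltr_pdivlMl // mulrC.
exists (ball Xm (del / C)); split; first exact: ball_open.
split; first exact: ballxx.
move=> y; rewrite -ball_normE /= distrC => /ball_N Ny n1.
apply: (pullback_cvg (N := N) (B := [set w | N (w - Xm) < del]) (D := 2 * del)
  (nS := nS) x_sol _ _ rho0 rho1 _ _ _ Ny).
- by move=> lam w; apply/differentiable_continuous/differentiable_partial_l.
- exact: normr_le_adapted K0.
- move=> u v /= uB vB; have := adapted_norm_subr_le (Dx f Xm lm) K u v Xm.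
  rewrite -/N; lra.
- by move=> n /tail [_ /ball_N].
- by move=> n /tail [/contr].
Qed.
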